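(* Let $k\in\mathbb{Z}$, and let $S=\{a_i \bmod d_i : 1\le i\le r\}$ and $S'=\{a_i-(d_i-1)k \bmod d_i : 1\le i\le r\}$ be exact covering systems. Then the map $\phi_{1,k}:\mathbb{Z}\to\mathbb{Z}$, $\phi_{1,k}(n)=n+k$, is a graph isomorphism from $G_S$ to $G_{S'}$.
   Context: A system of congruences $\{a_i \bmod d_i : 1\le i\le r\}$ with integers $a_i$ and nonzero integers $d_i$ (negative $d_i$ allowed; $n\equiv a \bmod -d$ means $n\equiv a\bmod d$) is an exact covering system if every integer satisfies exactly one of the congruences; congruences are distinguished by their chosen representatives. For such a system $S$, the exact covering system digraph $G_S$ has vertex set $\mathbb{Z}$ and edges $(n,d_in+a_i)$ for all $n\in\mathbb{Z}$, $1\le i\le r$. *)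

From mathcomp Require Import all_boot all_algebra.
Set Implicit Arguments. Unset Strict Implicit. Unset Printing Implicit Defensive.
Import GRing.Theory Num.Theory.
Local Open Scope ring_scope.

(* A system of congruences {a_i mod d_i : 1 <= i <= r} is a list of pairs
   (a_i, d_i) of integers; the list indexing distinguishes congruences. *)
Definition congr_system := seq (int * int).

Definition cong_rep (c : int * int) : int := c.1.
Definition cong_mod (c : int * int) : int := c.2.

Definition satisfies (n : int) (c : int * int) : bool :=
  (cong_mod c %| n - cong_rep c)%Z.

Definition exact_covering (S : congr_system) : Prop :=
  (forall c, c \in S -> cong_mod c != 0) /\
  (forall n : int, exists! i : 'I_(size S), satisfies n (nth (0, 0) S i)).

Definition ecs_edge (S : congr_system) (m n : int) : Prop :=
  exists2 c, c \in S & n = cong_mod c * m + cong_rep c.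

Definition digraph_iso (f : int -> int) (E E' : int -> int -> Prop) : Prop :=
  bijective f /\ (forall u v : int, E u v <-> E' (f u) (f v)).

Definition shift_system (S : congr_system) (k : int) : congr_system :=
  map (fun c => (cong_rep c - (cong_mod c - 1) * k, cong_mod c)) S.

Definition phi1 (k : int) (n : int) : int := n + k.

From mathcomp Require Import all_boot all_algebra.
From mathcomp Require Import ring.
Local Open Scope ring_scope.
Import GRing.Theory.

(* Conjugating the affine map n |-> d n + a by the translation n |-> n + k
   gives n |-> d n + (a - (d - 1) k), so each edge of G_S coming from the
   congruence a mod d is carried by phi_{1,k} to the edge of G_S' coming from
   the shifted congruence, and conversely. *)

Lemma phi1_bij (k : int) : bijective (phi1 k).
Proof. by exists (fun n => n - k) => n; rewrite /phi1 ?addrK ?subrK. Qed.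

Lemma affine_conj_translation (d a k m : int) :
  d * (m + k) + (a - (d - 1) * k) = d * m + a + k.
Proof. ring. Qed.

Lemma ecs_edge_shift (S : congr_system) (k u v : int) :
  ecs_edge S u v <-> ecs_edge (shift_system S k) (phi1 k u) (phi1 k v).
Proof.
rewrite /phi1; split.
  case=> [[a d] cS ->]; exists (a - (d - 1) * k, d).
    by apply/mapP; exists (a, d).
  by rewrite /= affine_conj_translation.
case=> [_ /mapP [[a d] cS ->]]; rewrite /cong_mod /cong_rep /=.
rewrite affine_conj_translation => /addIr ->.
by exists (a, d).
Qed.

Theorem mainTheorem7 (k : int) (S : congr_system) :
  exact_covering S -> exact_covering (shift_system S k) ->
  digraph_iso (phi1 k) (ecs_edge S) (ecs_edge (shift_system S k)).
Proof.
move=> _ _; split; first exact: phi1_bij.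
by move=> u v; apply: ecs_edge_shift.
Qed.
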